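(* Let $\alpha_1,\ldots,\alpha_N,\beta_1,\ldots,\beta_N>0$ and let $\langle A\rangle$ be the $N\times N$ matrix with entries $\langle A_{ij}\rangle=\dfrac{\alpha_i\beta_j}{1+\alpha_i\beta_j}$. (1) If $0<\alpha_i\beta_j<1$ for all $i,j\in\{1,\ldots,N\}$, then $\langle A\rangle=\sum_{k=1}^\infty L_k$ (a convergent series), where each $L_k$ is a rank-one $N\times N$ matrix whose only nonzero singular value is \[\ell_k=\sqrt{\sum_{i,j=1}^N(\alpha_i\beta_j)^{2k}}.\] (2) If $\alpha_i\beta_j>1$ for all $i,j\in\{1,\ldots,N\}$, then $\langle A\rangle=N\,\hat{\bm 1}\hat{\bm 1}^\top+\sum_{k=1}^\infty M_k$ (a convergent series), where $\hat{\bm 1}=(1,\ldots,1)^\top/\sqrt N$ and each $M_k$ is a rank-one $N\times N$ matrix whose only nonzero singular value is \[m_k=\sqrt{\sum_{i,j=1}^N(\alpha_i\beta_j)^{-2k}}.\]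
   Context: $\langle A\rangle$ is the expected adjacency matrix of the directed soft configuration model; no further structure is needed beyond the displayed entry formula. *)

From HB Require Import structures.
From mathcomp Require Import all_boot all_order all_algebra.
From mathcomp Require Import all_classical all_reals all_analysis.
Set Implicit Arguments. Unset Strict Implicit. Unset Printing Implicit Defensive.
Import Order.TTheory GRing.Theory Num.Theory.
Local Open Scope ring_scope.

Definition expA (R : realType) (N : nat) (a b : 'I_N -> R) : 'M[R]_N :=
  \matrix_(i, j) (a i * b j / (1 + a i * b j)).

Definition singular_value (R : realType) (m n : nat) (M : 'M[R]_(m, n)) (s : R) : Prop :=
  0 <= s /\ eigenvalue (M^T *m M) (s ^+ 2).

Definition rank_one_sv (R : realType) (m n : nat) (M : 'M[R]_(m, n)) (s : R) : Prop :=
  \rank M = 1%N /\ 0 < s /\ (forall t, 0 < t -> singular_value M t <-> t = s).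

From HB Require Import structures.
From mathcomp Require Import all_boot all_order all_algebra.
From mathcomp Require Import all_classical all_reals all_analysis.
From mathcomp Require Import ring.
Import Order.TTheory GRing.Theory Num.Theory.
Import numFieldNormedType.Exports.
Local Open Scope classical_set_scope.
Local Open Scope ring_scope.

(* For [x = alpha_i beta_j], the entry [x / (1 + x)] of <A> expands as the
   geometric series [- sum_(k >= 1) (-x)^k] when [x < 1], and as
   [1 + sum_(k >= 1) (-1/x)^k] when [x > 1].  The k-th terms, taken over all
   [i, j], form the outer product [u v^T] of the columns [((-alpha_i)^k)_i] and
   [(beta_j^k)_j] (resp. of the inverses).  Since [(u v^T)^T (u v^T) = |u|^2 v v^T],
   the only nonzero singular value of [u v^T] is [|u| |v|], which is the Frobenius
   norm [sqrt (sum_(i,j) (alpha_i beta_j)^(2k))]. *)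

Definition sqnorm {F : fieldType} {n} (v : 'cV[F]_n) : F := \sum_i v i 0 ^+ 2.

Section OuterProduct.
Context {F : fieldType}.
Implicit Types (c a : F).

Lemma tr_col_mul_col {n} (v : 'cV[F]_n) : v^T *m v = (sqnorm v)%:M.
Proof.
by apply/matrixP => ? ?; rewrite !ord1 !mxE; apply: eq_bigr => i _; rewrite !mxE.
Qed.

Lemma outer_gram m n (u : 'cV[F]_m) (v : 'cV[F]_n) :
  (u *m v^T)^T *m (u *m v^T) = sqnorm u *: (v *m v^T).
Proof.
by rewrite trmx_mul trmxK mulmxA -(mulmxA v) tr_col_mul_col mul_mx_scalar scalemxAl.
Qed.

Lemma eigenvalue_scale_outer_self n c (v : 'cV[F]_n) a : v != 0 -> a != 0 ->
  eigenvalue (c *: (v *m v^T)) a = (a == c * sqnorm v).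
Proof.
move=> v0 a0; apply/eigenvalueP/eqP => [[w wE w0] | ->].
  have scaleE : w *m (c *: (v *m v^T)) = (c * (w *m v) 0 0) *: v^T.
    by rewrite -scalemxAr mulmxA {1}[w *m v]mx11_scalar mul_scalar_mx scalerA.
  have wv0 : (w *m v) 0 0 != 0.
    apply: contra_neq w0 => wv0; apply/eqP.
    have : a *: w == 0 by rewrite -wE scaleE wv0 mulr0 scale0r.
    by rewrite scaler_eq0 (negbTE a0).
  have := congr1 (fun A => A *m v) wE.
  rewrite /= scaleE -!scalemxAl tr_col_mul_col {2}[w *m v]mx11_scalar.
  set e := (w *m v) 0 0 in wv0 *.
  move=> /matrixP/(_ 0 0); rewrite !mxE eqxx !mulr1n => prodE.
  by apply: (mulIf wv0); rewrite -prodE mulrAC.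
exists v^T; last by rewrite trmx_eq0.
by rewrite -scalemxAr mulmxA tr_col_mul_col mul_scalar_mx scalerA.
Qed.

Lemma outer_frobenius m n (u : 'cV[F]_m) (v : 'cV[F]_n) :
  \sum_i \sum_j (u *m v^T) i j ^+ 2 = sqnorm u * sqnorm v.
Proof.
rewrite /sqnorm mulr_suml; apply: eq_bigr => i _; rewrite mulr_sumr.
by apply: eq_bigr => j _; rewrite !mxE big_ord1 !mxE exprMn.
Qed.

End OuterProduct.

Section RealOuterProduct.
Context {R : realType}.

Lemma sqnorm_gt0 n (v : 'cV[R]_n) : v != 0 -> 0 < sqnorm v.
Proof.
move=> v0; rewrite lt_def sumr_ge0 ?andbT => [|i _]; last exact: sqr_ge0.
apply: contra_neq v0 => /psumr_eq0P sq0; apply/matrixP => i j.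
by rewrite ord1 mxE; apply/eqP; rewrite -sqrf_eq0 sq0 // => k _; exact: sqr_ge0.
Qed.

Lemma mxrank_outer m n (u : 'cV[R]_m) (v : 'cV[R]_n) :
  u != 0 -> v != 0 -> \rank (u *m v^T) = 1%N.
Proof.
move=> u0 v0; apply/eqP; rewrite eqn_leq (leq_trans (mxrankM_maxl _ _)) ?rank_leq_col //.
rewrite lt0n mxrank_eq0; apply: contra_neq u0 => uv0.
have : u *m v^T *m v = sqnorm v *: u.
  by rewrite -mulmxA tr_col_mul_col mul_mx_scalar.
rewrite uv0 mul0mx => /esym/eqP; rewrite scaler_eq0 => /orP[|/eqP //].
by rewrite gt_eqF // sqnorm_gt0.
Qed.

Lemma outer_rank_one_sv m n (u : 'cV[R]_m) (v : 'cV[R]_n) :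
  u != 0 -> v != 0 ->
  rank_one_sv (u *m v^T) (Num.sqrt (\sum_i \sum_j (u *m v^T) i j ^+ 2)).
Proof.
move=> u0 v0; rewrite outer_frobenius.
have uv_gt0 : 0 < sqnorm u * sqnorm v by rewrite mulr_gt0 ?sqnorm_gt0.
split; first exact: mxrank_outer.
split => [|t t_gt0]; first by rewrite sqrtr_gt0.
have t2_neq0 : t ^+ 2 != 0 by rewrite sqrf_eq0 gt_eqF.
rewrite /singular_value outer_gram eigenvalue_scale_outer_self //.
split => [[_ /eqP <-] | ->]; first by rewrite sqrtr_sqr gtr0_norm.
by rewrite sqrtr_ge0 sqr_sqrtr ?ltW.
Qed.

Lemma rank_one_svN m n (M : 'M[R]_(m, n)) s : rank_one_sv (- M) s <-> rank_one_sv M s.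
Proof.
have gramN : (- M)^T *m (- M) = M^T *m M.
  by rewrite [(- M)^T]linearN mulNmx mulmxN opprK.
by rewrite /rank_one_sv /singular_value mxrank_opp gramN.
Qed.

End RealOuterProduct.

Lemma cvg_geometric_from1 (R : archiRealFieldType) (q : R) : `|q| < 1 ->
  (fun n => \sum_(1 <= k < n) q ^+ k) @ \oo --> q / (1 - q).
Proof.
move=> q_lt1; rewrite -cvg_shiftS.
suff -> : (fun n => \sum_(1 <= k < n.+1) q ^+ k) = series (geometric q q).
  exact: cvg_geometric_series.
by apply/funext => n; rewrite big_add1 /series /=; apply: eq_bigr => k _; rewrite exprS.
Qed.

Section ExpectedAdjacencySeries.
Context {R : realType}.

Lemma alt_series_cvg_lt1 (x : R) : `|x| < 1 ->
  (fun n => \sum_(1 <= k < n) - (- x) ^+ k) @ \oo --> x / (1 + x).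
Proof.
move=> x_lt1; rewrite (_ : x / (1 + x) = - (- x / (1 - - x))); last first.
  by rewrite opprK mulNr opprK.
under eq_fun do rewrite sumrN.
by apply: cvgN; apply: cvg_geometric_from1; rewrite normrN.
Qed.

Lemma alt_series_cvg_gt1 (x : R) : 1 < `|x| ->
  (fun n => 1 + \sum_(1 <= k < n) (- x^-1) ^+ k) @ \oo --> x / (1 + x).
Proof.
move=> x_gt1; have x_neq0 : x != 0 by rewrite -normr_gt0 (lt_trans ltr01).
have xD1_neq0 : 1 + x != 0.
  rewrite addr_eq0 eq_sym eqr_oppLR; apply: contraTneq x_gt1 => ->.
  by rewrite normrN normr1 ltxx.
rewrite (_ : x / (1 + x) = 1 + - x^-1 / (1 - - x^-1)); last first.
  by rewrite opprK; field; rewrite x_neq0 addrC xD1_neq0.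
apply: cvgD; first exact: cvg_cst.
by apply: cvg_geometric_from1; rewrite normrN normrV ?unitfE // invf_lt1 // (lt_trans ltr01).
Qed.

Definition geom_term {n} (a b : 'I_n -> R) k : 'M[R]_n :=
  \col_i ((- a i) ^+ k) *m (\col_j (b j ^+ k))^T.

Lemma geom_termE n (a b : 'I_n -> R) k i j : geom_term a b k i j = (- (a i * b j)) ^+ k.
Proof. by rewrite !mxE big_ord1 !mxE -exprMn mulNr. Qed.

Lemma geom_partial_sumE n (a b : 'I_n -> R) m i j :
  (\sum_(1 <= k < m) geom_term a b k) i j = \sum_(1 <= k < m) (- (a i * b j)) ^+ k.
Proof. by rewrite summxE; apply: eq_bigr => k _; rewrite geom_termE. Qed.

Lemma geom_term_rank_one_sv n (a b : 'I_n -> R) k :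
  (0 < n)%N -> (forall i, a i != 0) -> (forall j, b j != 0) ->
  rank_one_sv (geom_term a b k) (Num.sqrt (\sum_i \sum_j (a i * b j) ^+ (2 * k))).
Proof.
move=> n_gt0 a_neq0 b_neq0; set i0 := Ordinal n_gt0.
have col_neq0 (c : 'I_n -> R) : c i0 != 0 -> \col_i c i != 0.
  by apply: contraNneq => /matrixP/(_ i0 0); rewrite !mxE => ->.
have -> : \sum_i \sum_j (a i * b j) ^+ (2 * k) = \sum_i \sum_j geom_term a b k i j ^+ 2.
  apply: eq_bigr => i _; apply: eq_bigr => j _.
  by rewrite geom_termE -exprM [in RHS]mulnC !exprM sqrrN.
by apply: outer_rank_one_sv; apply: col_neq0; rewrite ?expf_neq0 ?oppr_eq0.
Qed.

Lemma scaled_normalized_ones n : (0 < n)%N ->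
  n%:R *: ((const_mx (Num.sqrt n%:R)^-1 : 'cV[R]_n)
           *m (const_mx (Num.sqrt n%:R)^-1 : 'cV[R]_n)^T) = const_mx 1.
Proof.
move=> n_gt0; apply/matrixP => i j.
rewrite !mxE big_ord1 !mxE -expr2 exprVn sqr_sqrtr ?ler0n // divff //.
by rewrite pnatr_eq0 -lt0n.
Qed.

End ExpectedAdjacencySeries.

Theorem lemmaS30 (R : realType) (N : nat) (alpha beta : 'I_N -> R)
  (hN : (0 < N)%N) (ha : forall i, 0 < alpha i) (hb : forall j, 0 < beta j) :
  ((forall i j, alpha i * beta j < 1) ->
    exists L : nat -> 'M[R]_N,
      (forall k, (0 < k)%N ->
         rank_one_sv (L k)
           (Num.sqrt (\sum_i \sum_j (alpha i * beta j) ^+ (2 * k)))) /\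
      (forall i j, (fun n => (\sum_(1 <= k < n) L k) i j) @ \oo --> expA alpha beta i j)) /\
  ((forall i j, 1 < alpha i * beta j) ->
    exists M : nat -> 'M[R]_N,
      (forall k, (0 < k)%N ->
         rank_one_sv (M k)
           (Num.sqrt (\sum_i \sum_j ((alpha i * beta j)^-1) ^+ (2 * k)))) /\
      (forall i j, (fun n => (N%:R *: ((const_mx (Num.sqrt N%:R)^-1 : 'cV[R]_N)
                           *m (const_mx (Num.sqrt N%:R)^-1 : 'cV[R]_N)^T)
                 + \sum_(1 <= k < n) M k) i j) @ \oo --> expA alpha beta i j)).
Proof.
have a_neq0 i : alpha i != 0 by rewrite gt_eqF.
have b_neq0 j : beta j != 0 by rewrite gt_eqF.
have ab_gt0 i j : 0 < alpha i * beta j by rewrite mulr_gt0.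
split=> [lt1 | gt1].
  exists (fun k => - geom_term alpha beta k); split=> [k _ | i j].
    exact/rank_one_svN/geom_term_rank_one_sv.
  rewrite mxE (_ : (fun n => _) = fun n => \sum_(1 <= k < n) - (- (alpha i * beta j)) ^+ k).
    by apply: alt_series_cvg_lt1; rewrite gtr0_norm ?lt1.
  by apply/funext => n; rewrite sumrN mxE geom_partial_sumE sumrN.
exists (geom_term (fun i => (alpha i)^-1) (fun j => (beta j)^-1)); split=> [k _ | i j].
  under eq_bigr do under eq_bigr do rewrite invfM.
  by apply: geom_term_rank_one_sv => // ?; rewrite invr_eq0.
rewrite scaled_normalized_ones // mxE.
rewrite (_ : (fun n => _) = fun n => 1 + \sum_(1 <= k < n) (- (alpha i * beta j)^-1) ^+ k).
  by apply: alt_series_cvg_gt1; rewrite gtr0_norm ?gt1.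
by apply/funext => n; rewrite mxE geom_partial_sumE mxE invfM.
Qed.
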